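(* Let $\mathbf{O}\,\dot\cup\,\{S\}$ be a finite set of categorical variables, $\hat{s}$ a fixed value of $S$, and $\mathcal{G}$ a DAG over $\mathbf{O}\cup\{S\}$ in which $S$ has no children. Let $P$ be a distribution over $\mathbf{O}$ such that $p(\mathrm{pa}_{\mathcal{G}}(S)=\mathbf{z})>0$ for every value $\mathbf{z}$ of $\mathrm{pa}_{\mathcal{G}}(S)$. Then $$P\in\mathbf{BN}(\mathcal{G})[^{S=\hat{s}}\iff P[^{\mathrm{pa}_{\mathcal{G}}(S)}\in\mathbf{BN}(\mathcal{G}_{\mathbf{O}})[^{\mathrm{pa}_{\mathcal{G}}(S)},$$ where $\mathcal{G}_{\mathbf{O}}$ is the induced subgraph of $\mathcal{G}$ on $\mathbf{O}$.
   Context: $\mathbf{BN}(\mathcal{H})$ for a DAG $\mathcal{H}$ is the set of distributions over its nodes satisfying the Markov condition (each variable independent of its non-descendant non-parents given its parents; equivalently $p(\mathbf{x})=\prod_X p(x\mid\mathrm{pa}_{\mathcal{H}}(X))$). For a model $\mathbf{M}$ over $\mathbf{O}\cup\{S\}$, $\mathbf{M}[^{S=\hat{s}}$ is the set of distributions $Q$ over $\mathbf{O}$ such that there is $R\in\mathbf{M}$ with $r(\hat{s})>0$ and $q(\mathbf{o})=r(\mathbf{o}\mid\hat{s})$. For a distribution $P$ over $\mathbf{O}$ and $\mathbf{C}\subseteq\mathbf{O}$, $P[^{\mathbf{C}}$ denotes the conditional distribution of $\mathbf{O}\setminus\mathbf{C}$ given $\mathbf{C}$ under $P$; for a model $\mathbf{M}$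 over $\mathbf{O}$, $\mathbf{M}[^{\mathbf{C}}$ is the set of conditional distributions $Q$ of $\mathbf{O}\setminus\mathbf{C}$ given $\mathbf{C}$ for which there is $R\in\mathbf{M}$ with $r(\mathbf{c})>0$ for all values $\mathbf{c}$ and $q(\cdot\mid\mathbf{c})=r(\cdot\mid\mathbf{c})$. *)

From HB Require Import structures.
From mathcomp Require Import all_boot all_order all_algebra.
Set Implicit Arguments. Unset Strict Implicit. Unset Printing Implicit Defensive.
Import Order.TTheory GRing.Theory Num.Theory.
Local Open Scope ring_scope.

Definition assign (I : finType) (dom : I -> finType) : finType :=
  {dffun forall i : I, dom i}.

Definition is_dist (R : realFieldType) (T : finType) (p : T -> R) : Prop :=
  (forall t, 0 <= p t) /\ \sum_t p t = 1.

Definition marg (R : realFieldType) (I : finType) (dom : I -> finType)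
  (p : assign dom -> R) (A : {set I}) (x : assign dom) : R :=
  \sum_(y : assign dom | [forall i in A, y i == x i]) p y.

(* A DAG is given by its edge relation: G u v means u -> v. *)
Definition acyclic (I : finType) (G : rel I) : Prop :=
  forall u v, G u v -> ~~ connect G v u.

Definition pa (I : finType) (G : rel I) (v : I) : {set I} := [set u | G u v].

Definition BN (R : realFieldType) (I : finType) (dom : I -> finType)
  (G : rel I) (p : assign dom -> R) : Prop :=
  is_dist p /\
  forall x, p x = \prod_(v : I) (marg p (v |: pa G v) x / marg p (pa G v) x).

(* Variables O (dot-cup) {S}: encoded as option O, with None = S. *)
Definition fdom (O : finType) (dom : O -> finType) (DS : finType)
  (v : option O) : finType :=
  match v with None => DS | Some o => dom o end.

Definition join (O : finType) (dom : O -> finType) (DS : finType)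
  (x : assign dom) (s : DS) : assign (fdom dom DS) :=
  finfun (fun v : option O =>
    match v as v' return fdom dom DS v' with
    | None => s
    | Some o => x o
    end).

Definition paS (O : finType) (G : rel (option O)) : {set O} :=
  [set o | G (Some o) None].

Definition induced (O : finType) (G : rel (option O)) : rel O :=
  fun u v => G (Some u) (Some v).

Definition BN_sel (R : realFieldType) (O : finType) (dom : O -> finType)
  (DS : finType) (G : rel (option O)) (shat : DS) (p : assign dom -> R) : Prop :=
  exists r : assign (fdom dom DS) -> R,
    BN G r /\ 0 < \sum_(x : assign dom) r (join x shat) /\
    forall x, p x = r (join x shat) / \sum_(x' : assign dom) r (join x' shat).

(* P[^C \in M[^C for M = BN(G'): conditional distributions of O\C given C,
   written as functions of the full assignment x. *)
Definition BN_cond (R : realFieldType) (O : finType) (dom : O -> finType)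
  (G' : rel O) (C : {set O}) (p : assign dom -> R) : Prop :=
  exists r : assign dom -> R,
    BN G' r /\ (forall x, 0 < marg r C x) /\
    forall x, p x / marg p C x = r x / marg r C x.

From HB Require Import structures.
From mathcomp Require Import all_boot all_order all_algebra.
From mathcomp Require Import ring lra.
Import Order.TTheory GRing.Theory Num.Theory.
Set Implicit Arguments. Unset Strict Implicit. Unset Printing Implicit Defensive.
Local Open Scope ring_scope.

(* An assignment of O ∪ {S} is a pair (x, s) (join/proj), and r_O(x) = Σ_s r(x,s)
   is the marginal of r on O.  Write C = pa_G(S).  Since S has no children, the
   BN product of any r over G splits (bn_prod_join) as
       Π_G r (x, s) = r(x_C, s) / r_O(x_C) · Π_{G_O} r_O (x),
   i.e. into the conditional of S given C times the G_O-product of r_O.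
   (⇒, BN_sel_cond) If P = r(·, ŝ)/r(ŝ) with r ∈ BN(G), then r_O ∈ BN(G_O)
   (marg_O_BN) and the selection factor r(x_C, ŝ)/r_O(x_C) only depends on x_C,
   so it cancels in P(x)/P(x_C) = r_O(x)/r_O(x_C).
   (⇐, BN_cond_sel) Given r ∈ BN(G_O) with P(·|C) = r(·|C), add S as a child of
   C through a two-point kernel h(ŝ | x_C) = c · P(x_C)/r(x_C), with c chosen
   so that h takes values in [0,1].  The extension r·h lies in BN(G) (extend_BN)
   and its conditional at S = ŝ is P. *)

Definition bn_prod (R : realFieldType) (I : finType) (dom : I -> finType)
  (G : rel I) (p : assign dom -> R) (x : assign dom) : R :=
  \prod_(v : I) (marg p (v |: pa G v) x / marg p (pa G v) x).

Lemma ler_sum_term (R : realFieldType) (I : finType) (F : I -> R) (i : I) :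
  (forall j, 0 <= F j) -> F i <= \sum_j F j.
Proof. by move=> F_ge0; rewrite (bigD1 i) //= lerDl sumr_ge0. Qed.

Section Marginals.
Variables (R : realFieldType) (I : finType) (dom : I -> finType).
Implicit Types (p q : assign dom -> R) (A : {set I}) (x : assign dom).

Lemma marg_agree p A x x' :
  [forall i in A, x' i == x i] -> marg p A x' = marg p A x.
Proof.
move=> /forallP agree; apply: eq_bigl => y; apply: eq_forallb => i.
by case: (boolP (i \in A)) => //= iA; rewrite (eqP (implyP (agree i) iA)).
Qed.

Lemma marg_ext p q A x : p =1 q -> marg p A x = marg q A x.
Proof. by move=> epq; apply: eq_bigr. Qed.

Lemma le_marg p A x : (forall y, 0 <= p y) -> p x <= marg p A x.
Proof.
move=> p_ge0; rewrite /marg (bigD1 x) /=; last by apply/forall_inP.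
by rewrite lerDl sumr_ge0.
Qed.

End Marginals.

Section TwoPoint.
Variables (R : realFieldType) (T : finType) (t0 t1 : T).

Definition two_point (a : R) (t : T) : R := (t == t0)%:R * a + (t == t1)%:R * (1 - a).

Lemma two_point_dist (a : R) : 0 <= a <= 1 -> is_dist (two_point a).
Proof.
move=> /andP[a_ge0 a_le1]; split=> [t|].
  by rewrite addr_ge0 // mulr_ge0 ?ler0n ?subr_ge0.
have mass1 u : \sum_(t : T) (t == u)%:R = 1 :> R.
  by rewrite (bigD1 u) //= eqxx big1 ?addr0 // => t /negbTE ->.
by rewrite big_split /= -!mulr_suml !mass1 !mul1r addrC subrK.
Qed.

Lemma two_point_t0 (a : R) : t0 != t1 -> two_point a t0 = a.
Proof. by move=> /negbTE t01; rewrite /two_point eqxx t01 mul1r mul0r addr0. Qed.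

End TwoPoint.

Lemma exists_other (T : finType) (t : T) : (1 < #|T|)%N -> exists t', t' != t.
Proof.
move=> /card_gt1P [a [b [_ _ ab]]].
by case: (eqVneq a t) => [<-|a_neq]; [exists b; rewrite eq_sym | exists a].
Qed.

Section JoinedAssignments.
Variables (R : realFieldType) (O : finType) (dom : O -> finType) (DS : finType).
Local Notation assignS := (assign (fdom dom DS)).
Implicit Types (x : assign dom) (s : DS) (F : assignS -> R).

Definition proj (y : assignS) : assign dom := @finfun O dom (fun o => y (Some o)).

Lemma join_proj (y : assignS) : join (proj y) (y None) = y.
Proof. by apply/ffunP => -[o|]; rewrite !ffunE. Qed.

Lemma proj_join x s : proj (join x s) = x.
Proof. by apply/ffunP => o; rewrite !ffunE. Qed.

Lemma join_None x s : join x s None = s.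
Proof. by rewrite ffunE. Qed.

Lemma join_Some x s o : join x s (Some o) = x o.
Proof. by rewrite ffunE. Qed.

Lemma sum_join F : \sum_y F y = \sum_x \sum_s F (join x s).
Proof.
rewrite pair_big (reindex (fun xs : assign dom * DS => join xs.1 xs.2)) //=.
exists (fun y => (proj y, y None)) => [[x s] _|y _] /=.
  by rewrite proj_join join_None.
by rewrite join_proj.
Qed.

Definition margO F x : R := \sum_s F (join x s).

Definition margCS F (C : {set O}) x s : R :=
  \sum_(x' : assign dom | [forall o in C, x' o == x o]) F (join x' s).

Lemma sum_margCS F C x : \sum_s margCS F C x s = marg (margO F) C x.
Proof. by rewrite /marg /margO exchange_big. Qed.

Lemma agree_join (A : {set option O}) x x' s s' :
  [forall i in A, join x' s' i == join x s i] =
  [forall o in [set o | Some o \in A], x' o == x o] && ((None \in A) ==> (s' == s)).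
Proof.
apply/forallP/andP => [agree|[/forallP agreeO agreeS] [o|]].
- split; last by apply/implyP => SA; have := implyP (agree None) SA; rewrite !join_None.
  apply/forallP => o; apply/implyP; rewrite inE => oA.
  by have := implyP (agree (Some o)) oA; rewrite !join_Some.
- by apply/implyP => oA; rewrite !join_Some; apply: (implyP (agreeO o)); rewrite inE.
- by apply/implyP => SA; rewrite !join_None (implyP agreeS SA).
Qed.

Lemma marg_join F (A : {set option O}) x s :
  marg F A (join x s) =
  \sum_(x' : assign dom | [forall o in [set o | Some o \in A], x' o == x o])
     (if None \in A then F (join x' s) else \sum_s' F (join x' s')).
Proof.
rewrite /marg big_mkcond sum_join [RHS]big_mkcond /=; apply: eq_bigr => x' _.
under eq_bigr => s' _ do rewrite agree_join.
case: [forall _ in _, _]; last by rewrite big1 //; case: ifP.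
case: ifP => //= _; rewrite (bigD1 s) //= eqxx big1 ?addr0 // => s' /negbTE -> //.
Qed.

Lemma marg_join_O F (A : {set option O}) x s :
  None \notin A -> marg F A (join x s) = marg (margO F) [set o | Some o \in A] x.
Proof. by move=> SA; rewrite marg_join (negbTE SA). Qed.

Definition extend (r : assign dom -> R) (h : assign dom -> DS -> R) (y : assignS) : R :=
  r (proj y) * h (proj y) (y None).

Lemma extend_join r h x s : extend r h (join x s) = r x * h x s.
Proof. by rewrite /extend proj_join join_None. Qed.

Lemma margO_extend r h : (forall x, \sum_s h x s = 1) -> margO (extend r h) =1 r.
Proof.
move=> h1 x; rewrite /margO; under eq_bigr do rewrite extend_join.
by rewrite -mulr_sumr h1 mulr1.
Qed.

Lemma extend_dist r h : is_dist r -> (forall x, is_dist (h x)) -> is_dist (extend r h).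
Proof.
move=> [r_ge0 r1] h_dist; split=> [y|]; first by rewrite mulr_ge0 //; case: (h_dist (proj y)).
rewrite sum_join -r1; apply: eq_bigr => x _.
exact: (margO_extend r (fun x => proj2 (h_dist x))).
Qed.

Section Childless.
Variables (G : rel (option O)) (no_child : forall v, ~~ G None v).
Local Notation C := (paS G).

Lemma bn_prod_join F x s :
  bn_prod G F (join x s) =
  margCS F C x s / marg (margO F) C x *
  bn_prod (induced G) (margO F) x.
Proof.
have paO (A : {set option O}) (B : {set O}) :
    None \notin A -> [set o | Some o \in A] = B -> marg F A (join x s) = marg (margO F) B x.
  by move=> SA <-; apply: marg_join_O.
rewrite /bn_prod (bigD1 None) //=; congr (_ / _ * _).
- rewrite marg_join !inE eqxx /=; apply: eq_bigl => x'.
  by apply: eq_forallb => o; rewrite !inE.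
- by apply: paO; [rewrite inE (negbTE (no_child _)) | apply/setP => o; rewrite !inE].
rewrite (reindex_omap Some id) //=; last by case.
apply: eq_big => [o|o _]; first by rewrite eqxx.
by congr (_ / _); apply: paO; rewrite ?inE ?(negbTE (no_child _)) //;
  apply/setP => o'; rewrite !inE.
Qed.

Lemma marg_O_BN r :
  BN G r -> (forall x, 0 < marg (margO r) C x) -> BN (induced G) (margO r).
Proof.
move=> [[r_ge0 r1] r_fact] m_gt0; split; first split.
- by move=> x; apply: sumr_ge0.
- by rewrite /margO -sum_join.
move=> x; change (margO r x = bn_prod (induced G) (margO r) x); rewrite {1}/margO.
under eq_bigr => s _ do rewrite r_fact -/(bn_prod G r _) bn_prod_join //.
by rewrite -!mulr_suml sum_margCS divff ?mul1r // gt_eqF.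
Qed.

Lemma extend_BN r h :
  BN (induced G) r -> (forall x, is_dist (h x)) ->
  (forall x x', [forall o in C, x' o == x o] -> h x' =1 h x) ->
  BN G (extend r h).
Proof.
move=> [r_dist r_fact] h_dist h_local; split; first exact: extend_dist.
have [r_ge0 _] := r_dist.
have rO := margO_extend r (fun x => proj2 (h_dist x)).
move=> y; rewrite -(join_proj y) -/(bn_prod _ _ _) bn_prod_join //.
move: (proj y) (y None) => x s; rewrite extend_join.
have -> : bn_prod (induced G) (margO (extend r h)) x = r x.
  by rewrite r_fact; apply: eq_bigr => v _; rewrite !(marg_ext _ _ rO).
have -> : margCS (extend r h) C x s = marg r C x * h x s.
  rewrite /margCS /marg mulr_suml; apply: eq_bigr => x' agree.
  by rewrite extend_join (h_local x x').
(* Where the parent marginal r(x_C) vanishes, r(x) vanishes as well. *)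
rewrite (marg_ext _ _ rO); have [m0|m_neq0] := eqVneq (marg r C x) 0.
  have rx0 : r x = 0 by apply/le_anti; rewrite r_ge0 andbT -m0 le_marg.
  by rewrite m0 rx0 !(mul0r, mulr0).
by rewrite [marg r C x * _]mulrC mulfK // mulrC.
Qed.

Lemma BN_sel_cond (shat : DS) (p : assign dom -> R) :
  (forall x, 0 < marg p C x) -> BN_sel G shat p -> BN_cond (induced G) C p.
Proof.
move=> p_gt0 [r [r_BN [K_gt0 p_def]]]; have [[r_ge0 _] r_fact] := r_BN.
set K := \sum_x r (join x shat) in K_gt0 p_def.
have pC x : marg p C x = margCS r C x shat / K.
  by rewrite /marg /margCS mulr_suml; apply: eq_bigr => x' _; rewrite p_def.
have M_gt0 x : 0 < margCS r C x shat.
  by have := p_gt0 x; rewrite pC pmulr_lgt0 // invr_gt0.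
have m_gt0 x : 0 < marg (margO r) C x.
  rewrite -sum_margCS; apply: lt_le_trans (M_gt0 x) (ler_sum_term _ _) => s.
  exact: sumr_ge0.
have O_BN := marg_O_BN r_BN m_gt0.
exists (margO r); split=> //; split=> // x.
have rO_fact : margO r x = bn_prod (induced G) (margO r) x := O_BN.2 x.
have r_sel : r (join x shat) = margCS r C x shat / marg (margO r) C x * margO r x.
  by rewrite r_fact -/(bn_prod G r _) bn_prod_join // -rO_fact.
rewrite p_def pC r_sel; field.
by rewrite !gt_eqF.
Qed.

Lemma BN_cond_sel (shat : DS) (p : assign dom -> R) :
  (1 < #|DS|)%N -> is_dist p -> (forall x, 0 < marg p C x) ->
  BN_cond (induced G) C p -> BN_sel G shat p.
Proof.
move=> DS_gt1 [_ p1] p_gt0 [r [r_BN [m_gt0 p_cond]]].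
have [s1 s1_shat] := exists_other shat DS_gt1.
(* The selection probability of ŝ given x_C is c · P(x_C)/r(x_C), where the
   normalising constant c keeps it in [0,1]. *)
pose odds x := marg p C x / marg r C x.
have odds_ge0 x : 0 <= odds x by rewrite divr_ge0 // ltW.
pose c := (1 + \sum_x odds x)^-1.
have sum_odds_ge0 : 0 <= \sum_x odds x by exact: sumr_ge0.
have c_gt0 : 0 < c by rewrite invr_gt0; lra.
pose h x := two_point shat s1 (c * odds x).
have h_dist x : is_dist (h x).
  apply: two_point_dist; rewrite mulr_ge0 ?(ltW c_gt0) //=.
  rewrite /c mulrC ler_pdivrMr ?mul1r; last lra.
  have := ler_sum_term x odds_ge0; lra.
have h_local x x' : [forall o in C, x' o == x o] -> h x' =1 h x.
  by move=> agree t; rewrite /h /odds !(marg_agree _ agree).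
have sel x : extend r h (join x shat) = c * p x.
  rewrite extend_join /h two_point_t0 1?eq_sym // /odds.
  move: (p_cond x) (p_gt0 x) (m_gt0 x).
  move: (marg p C x) (marg r C x) (p x) (r x) => pC rC px rx cond pC_gt0 rC_gt0.
  have -> : px = rx / rC * pC by rewrite -cond mulfVK // gt_eqF.
  by field; rewrite gt_eqF.
have K : \sum_x extend r h (join x shat) = c.
  by under eq_bigr do rewrite sel; rewrite -mulr_sumr p1 mulr1.
exists (extend r h); split; first exact: extend_BN.
by rewrite K; split=> // x; rewrite sel mulrC mulKf // gt_eqF.
Qed.

End Childless.
End JoinedAssignments.

Theorem theorem4 (R : realFieldType) (O : finType) (dom : O -> finType)
  (DS : finType) (HDS : (1 < #|DS|)%N) (shat : DS) (G : rel (option O))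
  (HG : acyclic G) (Hnochild : forall v, ~~ G None v)
  (p : assign dom -> R) (Hp : is_dist p)
  (Hpos : forall x, 0 < marg p (paS G) x) :
  BN_sel G shat p <-> BN_cond (induced G) (paS G) p.
Proof.
split; [exact: BN_sel_cond | exact: BN_cond_sel].
Qed.
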